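(* Let $G$ be a trigraph containing a fence gadget $F$ attached to a set $S$ and satisfying the attachment rule in $G$ with set $X$, and let $Y=V(G)\setminus(V(F)\cup S\cup X)$. In any partial $4$-sequence from $G$, as long as no contraction has involved two vertices of $V(F)$, no part intersects both $X$ and $S$, no part intersects both $Y$ and $S$, and no part intersects both $X$ and $Y$.
   Context: A trigraph $G$ consists of a vertex set $V(G)$ and two disjoint sets of unordered pairs of distinct vertices: black edges and red edges; the red graph is formed by the red edges. Contracting two distinct vertices $u,v$ replaces them by a new vertex $w$ such that, for every other vertex $z$, $wz$ is black if $uz,vz$ are both black, a non-edge if both are non-edges, and red otherwise. A partial $d$-sequence from $G$ is a sequence of trigraphs starting at $G$, each obtained from the previous by one contraction, all of maximum red degree at most $d$. Each vertex $u$ of a later trigraph corresponds to the set $u(G)$ (its part) of vertices of $G$ merged into it; a contraction of $u,u'$ involves a vertex $v$ of $G$ if $v\in u(G)\cup u'(G)$, and involves a pair $v,v'$ if $v\in u(G),v'\in u'(G)$ or vice versa. A fence gadget is a trigraph $F$ on $A\cup B$, $A=\{a_1,\dots,a_6\}$, $B=\{b_1,\dots,b_6\}$, whose black edges are those of the cycles $a_1a_2a_3a_4a_5a_6a_1$ and $b_1b_2b_3b_4b_5b_6b_1$ together with $b_1a_6$, and whose red edges are $a_ib_i$ for $i\in[6]$ and $a_ib_{i+1}$ for $i\in[5]$. Inside a trigraph $G$, $F$ is attached to a nonempty set $S\subseteq V(G)\setminus V(F)$ if every vertex of $A$ is joined by a black edge to every vertex of $S$ and no vertex of $B$ is adjacent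 to a vertex of $S$. $F$ satisfies the attachment rule in $G$ if $V(F)$ is the vertex set of a connected component of the red graph of $G$ and there is a set $X\subseteq V(G)\setminus(V(F)\cup S)$ such that every vertex of $A$ has exactly $X\cup S$ as its set of neighbours outside $V(F)$, every vertex of $B$ has exactly $X$ as its set of neighbours outside $V(F)$ (all these edges black), and every vertex of $X$ is adjacent to every vertex of $S$. *)

From mathcomp Require Import all_boot.
Set Implicit Arguments. Unset Strict Implicit. Unset Printing Implicit Defensive.

(* The initial trigraph G has vertex set the whole finite type V, black    *)
(* edge relation [gb] and red edge relation [gr] (hypotheses of the main   *)
(* theorem: both symmetric, irreflexive, disjoint).                        *)

Definition trigraph_wf (V : finType) (gb gr : rel V) : Prop :=
  [/\ symmetric gb, symmetric gr, irreflexive gb, irreflexive gr &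
      forall x y, ~~ (gb x y && gr x y)].

(* Trigraphs occurring in a contraction sequence: every vertex is labelled *)
(* by its part (the set of vertices of G merged into it).                  *)
Record ltrig (V : finType) := LTrig {
  lverts : {set {set V}};
  lblack : rel {set V};
  lred   : rel {set V} }.

Section Seqs.
Variable V : finType.

Definition init_trig (gb gr : rel V) : ltrig V :=
  LTrig [set [set x] | x : V]
    (fun A B => [exists x, exists y, [&& A == [set x], B == [set y] & gb x y]])
    (fun A B => [exists x, exists y, [&& A == [set x], B == [set y] & gr x y]]).

Definition lnon (H : ltrig V) (x y : {set V}) := ~~ lblack H x y && ~~ lred H x y.

Definition contract (H : ltrig V) (u v : {set V}) : ltrig V :=
  let w := u :|: v in
  let nb z := lblack H u z && lblack H v z in
  let nn z := lnon H u z && lnon H v z in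
  LTrig (w |: ((lverts H :\ u) :\ v))
    (fun a b => if a == w then (b != w) && nb b
                else if b == w then nb a else lblack H a b)
    (fun a b => if a == w then [&& b != w, ~~ nb b & ~~ nn b]
                else if b == w then ~~ nb a && ~~ nn a else lred H a b).

Definition max_red_deg_le (d : nat) (H : ltrig V) : Prop :=
  forall a, a \in lverts H -> #|[set b in lverts H | lred H a b]| <= d.

Definition trig_after (gb gr : rel V) (s : seq ({set V} * {set V})) : ltrig V :=
  foldl (fun H p => contract H p.1 p.2) (init_trig gb gr) s.

Definition partial_seq (d : nat) (gb gr : rel V) (s : seq ({set V} * {set V})) : Prop :=
  (forall i, i < size s ->
     let p := nth (set0, set0) s i in
     [/\ p.1 \in lverts (trig_after gb gr (take i s)),
         p.2 \in lverts (trig_after gb gr (take i s)) & p.1 != p.2])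
  /\ (forall i, i <= size s -> max_red_deg_le d (trig_after gb gr (take i s))).

Definition involves_pair (u u' : {set V}) (v v' : V) : bool :=
  ((v \in u) && (v' \in u')) || ((v \in u') && (v' \in u)).

End Seqs.

(* Fence gadget.  Labels: (false, i) = a_{i+1}, (true, i) = b_{i+1}.      *)
Definition flabel := (bool * 'I_6)%type.

Definition cyc6 (i j : 'I_6) : bool :=
  (val j == (val i).+1 %% 6) || (val i == (val j).+1 %% 6).

(* black: the two 6-cycles, plus b_1 a_6 *)
Definition fence_black (x y : flabel) : bool :=
  if x.1 == y.1 then cyc6 x.2 y.2
  else ((x.1 && (val x.2 == 0) && (val y.2 == 5)) ||
        (y.1 && (val y.2 == 0) && (val x.2 == 5))).

(* red: a_i b_i (i in [6]) and a_i b_{i+1} (i in [5]) *)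
Definition fence_red (x y : flabel) : bool :=
  (x.1 != y.1) &&
  (let ai := if x.1 then y.2 else x.2 in
   let bi := if x.1 then x.2 else y.2 in
   (val bi == val ai) || (val bi == (val ai).+1)).

Section Fence.
Variable V : finType.
Variables (gb gr : rel V).

Definition adj (x y : V) := gb x y || gr x y.

Definition is_fence (f : flabel -> V) : Prop :=
  injective f /\
  forall x y, gb (f x) (f y) = fence_black x y /\ gr (f x) (f y) = fence_red x y.

Definition fA (f : flabel -> V) : {set V} := [set f (false, i) | i : 'I_6].
Definition fB (f : flabel -> V) : {set V} := [set f (true, i) | i : 'I_6].
Definition fV (f : flabel -> V) : {set V} := [set f x | x : flabel].

Definition attached (f : flabel -> V) (S : {set V}) : Prop :=
  [/\ S != set0, [disjoint S & fV f],
      (forall a s, a \in fA f -> s \in S -> gb a s) &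
      (forall b s, b \in fB f -> s \in S -> ~~ adj b s)].

Definition red_component (C : {set V}) : Prop :=
  C != set0 /\ forall x, x \in C -> forall y, connect gr x y = (y \in C).

Definition attachment_rule (f : flabel -> V) (S X : {set V}) : Prop :=
  [/\ red_component (fV f),
      [disjoint X & fV f :|: S],
      (forall a z, a \in fA f -> z \notin fV f ->
         (adj a z = (z \in X :|: S)) /\ (z \in X :|: S -> gb a z)),
      (forall b z, b \in fB f -> z \notin fV f ->
         (adj b z = (z \in X)) /\ (z \in X -> gb b z)) &
      (forall x s, x \in X -> s \in S -> adj x s)].

End Fence.

From mathcomp Require Import all_boot.
Set Implicit Arguments. Unset Strict Implicit. Unset Printing Implicit Defensive.

(* Along any contraction sequence the current trigraph is the quotient of G
   by its parts: two parts are joined by a black edge iff they are completely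
   black to each other, and by a red edge iff they are neither completely
   black nor completely non-adjacent.  Now let a part P contain a vertex x
   black to all six vertices of one side of the fence and a vertex y
   non-adjacent to all of them.  Since no two fence vertices have been merged,
   at most one of the six lies in P and the others lie in five distinct parts,
   each of which is red to P: the red degree of P is at least 5.  The side B
   is complete to X and anticomplete to S and Y, and the side A is complete
   to S and anticomplete to Y, so no part can meet two of X, S, Y. *)

Section Quotient.
Variables (V : finType) (gb gr : rel V).
Hypothesis gbC : symmetric gb.
Hypothesis grC : symmetric gr.
Hypothesis gb_gr : forall x y, ~~ (gb x y && gr x y).

Definition black_complete (P Q : {set V}) :=
  [forall x in P, forall y in Q, gb x y].
Definition anticomplete (P Q : {set V}) :=
  [forall x in P, forall y in Q, ~~ gb x y && ~~ gr x y].

Lemma black_completeP (P Q : {set V}) :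
  reflect {in P & Q, forall x y, gb x y} (black_complete P Q).
Proof.
apply: (iffP forall_inP) => [H x y xP yQ | H x xP].
  exact: (forall_inP (H x xP)).
by apply/forall_inP => y; apply: H.
Qed.

Lemma anticompleteP (P Q : {set V}) :
  reflect {in P & Q, forall x y, ~~ gb x y && ~~ gr x y} (anticomplete P Q).
Proof.
apply: (iffP forall_inP) => [H x y xP yQ | H x xP].
  exact: (forall_inP (H x xP)).
by apply/forall_inP => y; apply: H.
Qed.

Lemma black_completeUl (u v Q : {set V}) :
  black_complete (u :|: v) Q = black_complete u Q && black_complete v Q.
Proof.
apply/black_completeP/andP => [H | [/black_completeP H1 /black_completeP H2]].
  by split; apply/black_completeP => x y xP; apply: H; rewrite inE xP ?orbT.
by move=> x y /setUP[]; [apply: H1 | apply: H2].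
Qed.

Lemma anticompleteUl (u v Q : {set V}) :
  anticomplete (u :|: v) Q = anticomplete u Q && anticomplete v Q.
Proof.
apply/anticompleteP/andP => [H | [/anticompleteP H1 /anticompleteP H2]].
  by split; apply/anticompleteP => x y xP; apply: H; rewrite inE xP ?orbT.
by move=> x y /setUP[]; [apply: H1 | apply: H2].
Qed.

Lemma black_completeC (P Q : {set V}) : black_complete P Q = black_complete Q P.
Proof. by apply/black_completeP/black_completeP => H x y xP yQ; rewrite gbC H. Qed.

Lemma anticompleteC (P Q : {set V}) : anticomplete P Q = anticomplete Q P.
Proof. by apply/anticompleteP/anticompleteP => H x y xP yQ; rewrite gbC grC H. Qed.

Lemma anticomplete_black_complete (P Q : {set V}) :
  P != set0 -> Q != set0 -> anticomplete P Q -> ~~ black_complete P Q.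
Proof.
move=> /set0Pn[x xP] /set0Pn[y yQ] /anticompleteP/(_ x y xP yQ)/andP[nb _].
by apply/black_completeP => /(_ x y xP yQ); apply/negP.
Qed.

Definition quotient_trig (H : ltrig V) : Prop :=
  [/\ {in lverts H, forall P : {set V}, P != set0},
      {in lverts H &, forall P Q : {set V}, P != Q -> [disjoint P & Q]},
      forall x, exists2 P, P \in lverts H & x \in P,
      {in lverts H &, forall P Q : {set V}, P != Q -> lblack H P Q = black_complete P Q} &
      {in lverts H &, forall P Q : {set V}, P != Q ->
         lred H P Q = ~~ black_complete P Q && ~~ anticomplete P Q}].

Lemma init_trig_rel (r : rel V) x y :
  [exists x', exists y', [&& [set x] == [set x'], [set y] == [set y'] & r x' y']]
  = r x y.
Proof.
apply/existsP/idP => [[x' /existsP[y' /and3P[/eqP/set1_inj-> /eqP/set1_inj->]]]//|rxy].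
by exists x; apply/existsP; exists y; rewrite !eqxx.
Qed.

Lemma black_complete1 x y : black_complete [set x] [set y] = gb x y.
Proof.
by apply/black_completeP/idP => [|? ? ? /set1P-> /set1P->//]; apply; rewrite set11.
Qed.

Lemma anticomplete1 x y : anticomplete [set x] [set y] = ~~ gb x y && ~~ gr x y.
Proof.
by apply/anticompleteP/idP => [|? ? ? /set1P-> /set1P->//]; apply; rewrite set11.
Qed.

Lemma quotient_init : quotient_trig (init_trig gb gr).
Proof.
split=> /=.
- by move=> _ /imsetP[x _ ->]; apply/set0Pn; exists x; rewrite set11.
- move=> _ _ /imsetP[x _ ->] /imsetP[y _ ->] xy.
  by rewrite disjoints1 in_set1; apply: contra xy => /eqP->.
- by move=> x; exists [set x]; rewrite ?set11 ?imset_f.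
- by move=> _ _ /imsetP[x _ ->] /imsetP[y _ ->] _; rewrite init_trig_rel black_complete1.
- move=> _ _ /imsetP[x _ ->] /imsetP[y _ ->] _.
  rewrite init_trig_rel black_complete1 anticomplete1.
  by have := gb_gr x y; case: (gb x y); case: (gr x y).
Qed.

Section Contraction.
Variables (H : ltrig V) (u v : {set V}).
Hypotheses (qH : quotient_trig H) (uH : u \in lverts H) (vH : v \in lverts H).

Lemma in_contract (P : {set V}) :
  (P \in lverts (contract H u v)) =
  (P == u :|: v) || [&& P != v, P != u & P \in lverts H].
Proof. by rewrite /= in_setU1 !in_setD1. Qed.

Lemma old_part_neq (P : {set V}) : P \in lverts H -> P != u -> P != u :|: v.
Proof.
case: qH => nz dis _ _ _ PH Pu; apply/eqP => Puv.
have /set0Pn[x xu] := nz u uH.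
have := disjointFr (dis u P uH PH _) xu; rewrite eq_sym Pu Puv inE xu.
by move/(_ isT).
Qed.

Lemma lnon_anticomplete (P Q : {set V}) :
  P \in lverts H -> Q \in lverts H -> P != Q -> lnon H P Q = anticomplete P Q.
Proof.
case: qH => nz _ _ bl rd PH QH PQ; rewrite /lnon bl // rd //.
have := anticomplete_black_complete (nz P PH) (nz Q QH).
by case: (black_complete P Q); case: (anticomplete P Q) => // /(_ isT).
Qed.

Lemma quotient_contract : quotient_trig (contract H u v).
Proof.
have [nz dis cov bl rd] := qH.
have merged_new P : P \in lverts H -> P != u -> (P == u :|: v) = false.
  by move=> PH Pu; apply/negbTE/old_part_neq.
split.
- move=> P; rewrite in_contract => /orP[/eqP-> | /and3P[_ _ /nz //]].
  by rewrite setU_eq0 negb_and nz.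
- move=> P Q; rewrite !in_contract => /orP[/eqP-> | /and3P[Pv Pu PH]]
    /orP[/eqP-> | /and3P[Qv Qu QH]]; rewrite ?eqxx // => PQ.
  + by rewrite -setI_eq0 setIUl setU_eq0 !setI_eq0 !dis // eq_sym.
  + by rewrite -setI_eq0 setIUr setU_eq0 !setI_eq0 !dis.
  + exact: dis.
- move=> x; have [P PH xP] := cov x.
  have [xuv | xuv] := boolP (x \in u :|: v).
    by exists (u :|: v); rewrite // in_contract eqxx.
  exists P; rewrite // in_contract PH andbT; apply/orP; right.
  by apply/andP; split; apply: contraNneq xuv => <-; rewrite inE xP ?orbT.
- move=> P Q; rewrite !in_contract => /orP[/eqP-> | /and3P[Pv Pu PH]]
    /orP[/eqP-> | /and3P[Qv Qu QH]]; rewrite /= ?eqxx // => PQ.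
  + by rewrite merged_new // black_completeUl !bl // eq_sym.
  + by rewrite merged_new // black_completeC black_completeUl !bl // eq_sym.
  + by rewrite !merged_new // bl.
- move=> P Q; rewrite !in_contract => /orP[/eqP-> | /and3P[Pv Pu PH]]
    /orP[/eqP-> | /and3P[Qv Qu QH]]; rewrite /= ?eqxx // => PQ.
  + by rewrite merged_new // black_completeUl anticompleteUl !bl ?lnon_anticomplete // eq_sym.
  + rewrite merged_new // black_completeC anticompleteC black_completeUl anticompleteUl.
    by rewrite !bl ?lnon_anticomplete // eq_sym.
  + by rewrite !merged_new // rd.
Qed.

End Contraction.

Definition separated (T : {set V}) (H : ltrig V) : Prop :=
  {in lverts H, forall P : {set V}, {in T &, forall t1 t2, t1 \in P -> t2 \in P -> t1 = t2}}.

Lemma separated_init T : separated T (init_trig gb gr).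
Proof. by move=> _ /imsetP[x _ ->] t1 t2 _ _ /set1P-> /set1P->. Qed.

Lemma separated_contract T H u v :
  separated T H -> u \in lverts H -> v \in lverts H ->
  {in T &, forall t1 t2, ~~ involves_pair u v t1 t2} ->
  separated T (contract H u v).
Proof.
move=> sepH uH vH uv_sep P; rewrite /= in_setU1 !in_setD1.
case/orP=> [/eqP-> | /and3P[_ _ /sepH //]] t1 t2 t1T t2T.
move=> /setUP[t1u | t1v] /setUP[t2u | t2v].
- exact: sepH uH _ _ t1T t2T t1u t2u.
- by have := uv_sep t1 t2 t1T t2T; rewrite /involves_pair t1u t2v.
- by have := uv_sep t1 t2 t1T t2T; rewrite /involves_pair t1v t2u orbT.
- exact: sepH vH _ _ t1T t2T t1v t2v.
Qed.

Lemma trig_after_takeS (s : seq ({set V} * {set V})) i : i < size s ->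
  trig_after gb gr (take i.+1 s) =
  contract (trig_after gb gr (take i s))
           (nth (set0, set0) s i).1 (nth (set0, set0) s i).2.
Proof. by move=> ltis; rewrite (take_nth (set0, set0)) // /trig_after foldl_rcons. Qed.

Lemma trig_after_quotient_separated d (T : {set V}) s :
  partial_seq d gb gr s ->
  (forall i, i < size s ->
     {in T &, forall t1 t2,
        ~~ involves_pair (nth (set0, set0) s i).1 (nth (set0, set0) s i).2 t1 t2}) ->
  forall i, i <= size s ->
  quotient_trig (trig_after gb gr (take i s)) /\
  separated T (trig_after gb gr (take i s)).
Proof.
move=> [valid _] sepT; elim=> [|i IHi] lei.
  by rewrite take0; split; [exact: quotient_init | exact: separated_init].
have [qi sepi] := IHi (ltnW lei); have [uH vH _] := valid i lei.
rewrite trig_after_takeS //; split; first exact: quotient_contract.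
exact: separated_contract (sepT i lei).
Qed.

Definition part_of (H : ltrig V) t := odflt set0 [pick Q in lverts H | t \in Q].

Lemma part_ofP H t : quotient_trig H -> part_of H t \in lverts H /\ t \in part_of H t.
Proof.
case=> _ _ cov _ _; rewrite /part_of; case: pickP => [Q /andP[] // | none].
by have [Q QH tQ] := cov t; have := none Q; rewrite QH tQ.
Qed.

Lemma red_of_mixed H P Q x y t :
  quotient_trig H -> P \in lverts H -> Q \in lverts H -> P != Q ->
  x \in P -> y \in P -> t \in Q -> gb t x -> ~~ adj gb gr t y -> lred H P Q.
Proof.
case=> _ _ _ _ rd PH QH PQ xP yP tQ txb ty; rewrite rd //; apply/andP; split.
- by apply/black_completeP => /(_ y t yP tQ); rewrite gbC => tyb; move: ty; rewrite /adj tyb.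
- by apply/anticompleteP => /(_ x t xP tQ); rewrite gbC txb.
Qed.

Lemma witnesses_le_red_deg H T (I : finType) (g : I -> V) P x y :
  quotient_trig H -> separated T H -> P \in lverts H ->
  injective g -> (forall j, g j \in T) ->
  x \in P -> y \in P -> (forall j, gb (g j) x) -> (forall j, ~~ adj gb gr (g j) y) ->
  #|I| <= #|[set Q in lverts H | lred H P Q]|.+1.
Proof.
move=> qH sepH PH g_inj gT xP yP gx gy.
pose J := [set j | g j \notin P].
pose part j := part_of H (g j).
have red_parts : part @: J \subset [set Q in lverts H | lred H P Q].
  apply/subsetP => Q /imsetP[j]; rewrite inE => gjP ->.
  have [QH gjQ] := part_ofP (g j) qH.
  rewrite inE QH (red_of_mixed qH PH QH _ xP yP gjQ) //.
  by apply: contra gjP => /eqP->.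
have card_parts : #|part @: J| = #|J|.
  apply: card_in_imset => j1 j2 _ _ same.
  have [QH gj1Q] := part_ofP (g j1) qH; have [_ gj2Q] := part_ofP (g j2) qH.
  rewrite -/(part j1) -/(part j2) -same in gj2Q.
  exact: g_inj (sepH _ QH _ _ (gT j1) (gT j2) gj1Q gj2Q).
have few_inside : #|~: J| <= 1.
  apply/card_le1_eqP => j1 j2; rewrite !inE !negbK => inP1 inP2.
  by apply: g_inj; apply: sepH PH _ _ (gT _) (gT _) inP2 inP1.
rewrite -(cardsC J) -addn1 leq_add //.
by rewrite -card_parts subset_leq_card.
Qed.

End Quotient.

Theorem lemma4p7 (V : finType) (gb gr : rel V) (f : flabel -> V) (S X : {set V})
  (s : seq ({set V} * {set V})) :
  trigraph_wf gb gr ->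
  is_fence gb gr f ->
  attached gb gr f S ->
  attachment_rule gb gr f S X ->
  partial_seq 4 gb gr s ->
  (forall i, i < size s ->
     forall v v', v \in fV f -> v' \in fV f ->
       ~~ involves_pair (nth (set0, set0) s i).1 (nth (set0, set0) s i).2 v v') ->
  let Y := ~: (fV f :|: S :|: X) in
  forall i, i <= size s ->
  forall P, P \in lverts (trig_after gb gr (take i s)) ->
    [/\ ~~ (~~ [disjoint P & X] && ~~ [disjoint P & S]),
        ~~ (~~ [disjoint P & Y] && ~~ [disjoint P & S]) &
        ~~ (~~ [disjoint P & X] && ~~ [disjoint P & Y])].
Proof.
move=> [gbC grC _ _ gb_gr] [f_inj _] [_ _ A_S B_S] [_ X_out A_out B_out _]
  seq4 fence_sep Y i lei P PH.
have [qH sepH] := trig_after_quotient_separated gbC grC gb_gr seq4 fence_sep lei.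
have no_mixed_part c x y : x \in P -> y \in P ->
    (forall j, gb (f (c, j)) x) -> (forall j, ~~ adj gb gr (f (c, j)) y) -> False.
  move=> xP yP cx cy.
  have side_inj : injective (fun j => f (c, j)) by move=> j1 j2 /f_inj[].
  have side_in j : f (c, j) \in fV f by rewrite imset_f.
  have := witnesses_le_red_deg gbC qH sepH PH side_inj side_in xP yP cx cy.
  by rewrite card_ord ltnS ltnNge (seq4.2 i lei P PH).
have A_in j : f (false, j) \in fA f by rewrite imset_f.
have B_in j : f (true, j) \in fB f by rewrite imset_f.
have X_outF z : z \in X -> z \notin fV f.
  by move=> zX; have := disjointFr X_out zX; rewrite inE => /norP[].
have Y_out z : z \in Y -> [/\ z \notin fV f, z \notin S & z \notin X].
  by rewrite !inE => /norP[/norP[]].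
have B_X x : x \in X -> forall j, gb (f (true, j)) x.
  by move=> xX j; exact: (B_out _ x (B_in j) (X_outF x xX)).2 xX.
split; apply/negP => /andP[]; rewrite -!setI_eq0 =>
  /set0Pn[x /setIP[xP x_in]] /set0Pn[y /setIP[yP y_in]].
- by apply: (no_mixed_part true x y xP yP (B_X x x_in)) => j; apply: B_S.
- have [xF xS xX] := Y_out x x_in.
  apply: (no_mixed_part false y x yP xP) => j; first exact: A_S.
  by rewrite (A_out _ x (A_in j) xF).1 inE negb_or xX xS.
- have [yF _ yX] := Y_out y y_in.
  apply: (no_mixed_part true x y xP yP (B_X x x_in)) => j.
  by rewrite (B_out _ y (B_in j) yF).1 yX.
Qed.
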